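(* Let $G=(V,E)$ be an $n$-vertex graph, $q>0$ an integer, $0<\alpha\le1$, and suppose $n\ge q c_q/\alpha^2$, where $c_q=\sum_{i=0}^{q}q^i$. Let $u,v$ be two vertices chosen uniformly at random from $V$, and let $H_u$ and $H_v$ be the subgraphs visited by two (independent) $q$-random BFS starting at $u$ and $v$, respectively. Then with probability at least $1-2\alpha q c_q$, no edge is contained in both $H_u$ and $H_v$.
   Context: $q$-random BFS ($q$-RBFS) from a vertex $v$ in the random neighbor model (where a random neighbor query for $u$ returns a uniformly random neighbor of $u$): initialize a queue $Q=(v)$, level $\ell[v]=0$ (all others $\infty$), and $H=(\{v\},\emptyset)$ rooted at $v$; while $Q$ is nonempty, pop $u$ and make $q$ independent random neighbor queries for $u$ obtaining $s_{u,1},\dots,s_{u,q}$; for each $i$ add $s_{u,i}$ and the edge $\{u,s_{u,i}\}$ to $H$, and if $\ell[u]<q-1$ and $\ell[s_{u,i}]=\infty$, set $\ell[s_{u,i}]=\ell[u]+1$ and enqueue $s_{u,i}$; return $H$ (undirected, simple). *)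

From mathcomp Require Import all_boot all_order all_algebra.
Set Implicit Arguments. Unset Strict Implicit. Unset Printing Implicit Defensive.
Import Order.TTheory GRing.Theory Num.Theory.

Section RBFS.
Variables (T : finType) (e : rel T) (q : nat).

Definition nbrs (x : T) : {set T} := [set y | e x y].
Definition deg (x : T) : nat := #|nbrs x|.

(* Random source of one q-RBFS run.  Since every vertex is popped (hence
   queried) at most once, the q random-neighbour answers for vertex w can be
   drawn in advance: [f w] is the tuple (s_{w,1},...,s_{w,q}).  [None] is the
   (only possible) answer for an isolated vertex. *)
Definition source := {ffun T -> q.-tuple (option T)}.

(* BFS state: queue, levels (None = infinity), edge set of H *)
Definition state := (seq T * {ffun T -> option nat} * {set {set T}})%type.

Definition step_sample (u : T) (st : state) (o : option T) : state :=
  let: (Q, lvl, E) := st in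
  match o with
  | None => st
  | Some s =>
      let E' := [set u; s] |: E in
      match lvl u, lvl s with
      | Some l, None =>
          if l < q.-1 then
            (rcons Q s, [ffun x => if x == s then Some l.+1 else lvl x], E')
          else (Q, lvl, E')
      | _, _ => (Q, lvl, E')
      end
  end.

Fixpoint bfs_loop (f : source) (fuel : nat) (st : state) : {set {set T}} :=
  match fuel with
  | 0 => st.2
  | k.+1 =>
      let: (Q, lvl, E) := st in
      match Q with
      | [::] => E
      | u :: Q' => bfs_loop f k (foldl (step_sample u) (Q', lvl, E) (tval (f u)))
      end
  end.

(* edge set of H returned by q-RBFS from v with random source f
   (each vertex is enqueued at most once, so #|T| pops suffice) *)
Definition rbfs_edges (f : source) (v : T) : {set {set T}} :=
  bfs_loop f #|T|
    ([:: v], [ffun x => if x == v then Some 0 else None], set0).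

Variable R : realFieldType.
Local Open Scope ring_scope.

Definition answer_weight (x : T) (o : option T) : R :=
  match o with
  | Some y => if e x y then ((deg x)%:R)^-1 else 0
  | None => if deg x == 0 then 1 else 0
  end.

Definition source_weight (f : source) : R :=
  \prod_(x : T) \prod_(o <- tval (f x)) answer_weight x o.

Definition prob_disjoint : R :=
  \sum_(u : T) \sum_(v : T) \sum_(f1 : source) \sum_(f2 : source)
    ((#|T| ^ 2)%:R^-1 * source_weight f1 * source_weight f2
      * (if rbfs_edges f1 u :&: rbfs_edges f2 v == set0 then 1 else 0)).

End RBFS.

Definition c_q (q : nat) : nat := \sum_(i < q.+1) q ^ i.

(* Every edge of the graph H_v built by q-RBFS from v joins some a, reached from v
   by a walk of fewer than q sampled answers, to one of the q answers b sampled for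
   a; call such a pair (a, b) explored.  A common edge of H_u and H_v is then
   explored by both runs, so the failure probability is at most
   n^-2 * sum_(a,b) Y(a,b) (Y(a,b) + Y(b,a)), where Y(a,b) is the expected number
   of starting points exploring (a, b).  An explored pair is witnessed by a
   self-avoiding walk u = x_0, ..., x_d = a followed by b; its steps read the
   answers of distinct vertices, hence are independent, and each happens with
   probability at most q / deg(x_i).  Summed over u these random-walk weights are
   at most 1, because deg is stationary for the random walk on a symmetric graph;
   hence Y(a,b) <= c_q.  Each run explores at most q c_q pairs, so
   sum Y <= n q c_q, and the failure probability is at most
   2 q c_q * c_q / n <= 2 alpha q c_q. *)

From mathcomp Require Import all_boot all_order all_algebra.
From mathcomp.algebra_tactics Require Import ring lra.
Set Implicit Arguments. Unset Strict Implicit. Unset Printing Implicit Defensive.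
Import Order.TTheory GRing.Theory Num.Theory.

Lemma big_tuple0 (R : Type) (idx : R) (op : Monoid.law idx) (X : finType)
    (F : 0.-tuple X -> R) :
  \big[op/idx]_(t : 0.-tuple X) F t = F [tuple].
Proof. by rewrite (big_pred1 [tuple]) // => t; apply/esym/eqP/tuple0. Qed.

Lemma big_tuple_cons (R : Type) (idx : R) (op : Monoid.com_law idx)
    (X : finType) n (F : n.+1.-tuple X -> R) :
  \big[op/idx]_(t : n.+1.-tuple X) F t
  = \big[op/idx]_(x : X) \big[op/idx]_(t : n.-tuple X) F [tuple of x :: t].
Proof.
rewrite pair_big /= (reindex (fun p : X * n.-tuple X => [tuple of p.1 :: p.2])) //=.
exists (fun t => (thead t, [tuple of behead t])) => [[x t] _ | t _].
  by congr (_, _); apply: val_inj.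
by rewrite [RHS]tuple_eta.
Qed.

Lemma big_option (R : Type) (idx : R) (op : Monoid.com_law idx) (X : finType)
    (F : option X -> R) :
  \big[op/idx]_(o : option X) F o = op (F None) (\big[op/idx]_(x : X) F (Some x)).
Proof.
rewrite (bigD1 None) //= (reindex_omap Some id) //=; last by case.
by under eq_bigl do rewrite eqxx.
Qed.

Lemma exists_leq_sum (I : finType) (P : pred I) : [exists i, P i] <= \sum_i P i.
Proof.
case: existsP => [[i Pi]|//].
by rewrite (bigD1 i) //= Pi leq_addr.
Qed.

Local Open Scope ring_scope.

Lemma natr_orb_le (R : numDomainType) (a b : bool) : (a || b)%:R <= a%:R + b%:R :> R.
Proof. by case: a; case: b; rewrite /= ?addr0 ?add0r ?lerDl ?ler01. Qed.

Section Weights.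
Variables (R : realFieldType) (T : finType) (e : rel T).

Local Notation P := (answer_weight e R).

Definition tuple_weight (x : T) (s : seq (option T)) : R := \prod_(o <- s) P x o.

Lemma deg_gt0 x y : e x y -> (0 < deg e x)%N.
Proof. by move=> exy; apply/card_gt0P; exists y; rewrite inE. Qed.

Lemma answer_weight_ge0 x o : 0 <= P x o.
Proof. by case: o => [y|] /=; case: ifP; rewrite ?invr_ge0 ?ler0n. Qed.

Lemma sum_answer_weight x : \sum_o P x o = 1.
Proof.
rewrite big_option /=; have [d0|d_gt0] := posnP (deg e x).
  rewrite big1 ?addr0 // => y _.
  by case: ifP => // /deg_gt0; rewrite d0.
rewrite add0r -big_mkcond sumr_const.
have -> : #|[pred y | e x y]| = deg e x by rewrite /deg /nbrs cardsE.
by rewrite -[_ *+ _]mulr_natl mulfV // pnatr_eq0 -lt0n.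
Qed.

Lemma deg_answer_weight x y : (deg e x)%:R * P x (Some y) = (e x y)%:R.
Proof.
rewrite /=; case: ifP => [/deg_gt0 d_gt0|_]; last by rewrite mulr0.
by rewrite mulfV // pnatr_eq0 -lt0n.
Qed.

Lemma tuple_weight_cons x o s : tuple_weight x (o :: s) = P x o * tuple_weight x s.
Proof. exact: big_cons. Qed.

Lemma tuple_weight_ge0 x s : 0 <= tuple_weight x s.
Proof. by apply: prodr_ge0 => o _; apply: answer_weight_ge0. Qed.

Lemma sum_tuple_weight n x : \sum_(t : n.-tuple (option T)) tuple_weight x t = 1.
Proof.
elim: n => [|n IHn]; first by rewrite big_tuple0 /tuple_weight big_nil.
rewrite big_tuple_cons -[RHS](sum_answer_weight x); apply: eq_bigr => o _.
by under eq_bigr do rewrite tuple_weight_cons; rewrite -mulr_sumr IHn mulr1.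
Qed.

Lemma expect_mem n x o0 :
  \sum_(t : n.-tuple (option T)) tuple_weight x t * (o0 \in tval t)%:R
  <= n%:R * P x o0.
Proof.
elim: n => [|n IHn]; first by rewrite big_tuple0 /= mulr0 mul0r.
rewrite big_tuple_cons.
apply: (@le_trans _ _ (\sum_o P x o * ((o0 == o)%:R + n%:R * P x o0))).
  apply: ler_sum => o _; under eq_bigr do rewrite tuple_weight_cons -mulrA.
  rewrite -mulr_sumr; apply: ler_wpM2l; first exact: answer_weight_ge0.
  apply: (@le_trans _ _ (\sum_(t : n.-tuple (option T))
      tuple_weight x t * ((o0 == o)%:R + (o0 \in tval t)%:R))).
    apply: ler_sum => t _; apply: ler_wpM2l; first exact: tuple_weight_ge0.
    by rewrite in_cons; apply: natr_orb_le.
  rewrite (eq_bigr _ (fun t _ => mulrDr _ _ _)) big_split -mulr_suml /=.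
  by rewrite sum_tuple_weight mul1r lerD2l.
rewrite (eq_bigr _ (fun o _ => mulrDr _ _ _)) big_split -mulr_suml /=.
rewrite sum_answer_weight mul1r (bigD1 o0) //= eqxx mulr1 big1 ?addr0.
  by rewrite -[n.+1]add1n natrD mulrDl mul1r.
by move=> o; rewrite eq_sym => /negbTE ->; rewrite mulr0.
Qed.

Variable q : nat.
Local Notation source_weight := (@source_weight T e q R).
Local Notation answers := (q.-tuple (option T)).

Lemma expect_prod (g : T -> answers -> R) :
  \sum_(f : source T q) source_weight f * \prod_x g x (f x)
  = \prod_x \sum_(t : answers) tuple_weight x t * g x t.
Proof. by rewrite bigA_distr_bigA; apply: eq_bigr => f _; rewrite big_split. Qed.

Lemma source_weight_ge0 f : 0 <= source_weight f.
Proof. by apply: prodr_ge0 => x _; apply: tuple_weight_ge0. Qed.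

Lemma sum_source_weight : \sum_f source_weight f = 1.
Proof.
rewrite -(bigA_distr_bigA (fun x (t : answers) => tuple_weight x t)).
by apply: big1 => x _; apply: sum_tuple_weight.
Qed.

Lemma expect_prod_seq (X : Type) (r : seq (T * X)) (g : T * X -> answers -> R) :
  uniq (unzip1 r) ->
  \sum_f source_weight f * \prod_(p <- r) g p (f p.1)
  = \prod_(p <- r) \sum_(t : answers) tuple_weight p.1 t * g p t.
Proof.
move=> r_uniq.
have by_fst (F : T * X -> R) :
    \prod_(p <- r) F p = \prod_x \prod_(p <- r | p.1 == x) F p.
  exact: (partition_big fst predT).
transitivity (\sum_f source_weight f * \prod_x \prod_(p <- r | p.1 == x) g p (f x)).
  apply: eq_bigr => f _; rewrite by_fst; congr (_ * _).
  by apply: eq_bigr => x _; apply: eq_bigr => p /eqP ->.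
rewrite (expect_prod (fun x t => \prod_(p <- r | p.1 == x) g p t)).
rewrite [RHS]by_fst; apply: eq_bigr => x _.
rewrite (eq_bigr (fun p => \sum_(t : answers) tuple_weight x t * g p t)); last first.
  by move=> p /eqP ->.
under [LHS]eq_bigr do rewrite -(big_filter r).
rewrite -[RHS](big_filter r).
have : (size [seq p <- r | p.1 == x] <= 1)%N.
  by rewrite size_filter -(count_map fst (pred1 x)) count_uniq_mem // leq_b1.
case: [seq p <- r | p.1 == x] => [|p [|//]] _ /=.
  by under eq_bigr do rewrite big_nil mulr1; rewrite sum_tuple_weight big_nil.
by rewrite big_seq1; under eq_bigr do rewrite big_seq1.
Qed.

End Weights.

Lemma sum_mem_Some (X : finType) (s : seq (option X)) :
  (\sum_x (Some x \in s) <= size s)%N.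
Proof.
elim: s => [|o s IHs]; first by rewrite big1.
apply: (@leq_trans (\sum_x ((o == Some x) + (Some x \in s)))).
  by apply: leq_sum => x _; rewrite in_cons eq_sym; case: (_ == _).
rewrite big_split /= -add1n leq_add //.
case: o => [y|]; last by rewrite big1.
rewrite (bigD1 y) //= eqxx big1 // => x /negbTE.
by rewrite (inj_eq Some_inj) eq_sym => ->.
Qed.

Section Reach.
Variables (T : finType) (q : nat).
Implicit Types (f : source T q) (u a b : T).

Definition sampled f (x y : T) : bool := Some y \in tval (f x).

Fixpoint reach_in f (k : nat) u a : bool :=
  if k is k'.+1 then [exists y, sampled f u y && reach_in f k' y a] else a == u.

Definition reach f u a : bool := [exists k : 'I_q, reach_in f k u a].

Definition explored f u a b : bool := reach f u a && sampled f a b.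

Lemma count_sampled f a : (\sum_b sampled f a b <= q)%N.
Proof. by rewrite -(size_tuple (f a)); apply: sum_mem_Some. Qed.

Lemma count_reach_in f k u : (\sum_a reach_in f k u a <= q ^ k)%N.
Proof.
elim: k u => [|k IHk] u /=.
  by rewrite (bigD1 u) //= eqxx big1 // => a /negbTE ->.
apply: (@leq_trans (\sum_a \sum_y sampled f u y * reach_in f k y a)).
  apply: leq_sum => a _; apply: leq_trans (exists_leq_sum _) _.
  by apply: leq_sum => y _; rewrite mulnb.
rewrite exchange_big /= expnS.
apply: (@leq_trans (\sum_y sampled f u y * q ^ k)).
  by apply: leq_sum => y _; rewrite -big_distrr /= leq_mul2l IHk orbT.
by rewrite -big_distrl /= leq_mul2r count_sampled orbT.
Qed.

Lemma count_reach f u : (\sum_a reach f u a <= \sum_(k < q) q ^ k)%N.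
Proof.
apply: (@leq_trans (\sum_a \sum_(k < q) reach_in f k u a)).
  by apply: leq_sum => a _; apply: exists_leq_sum.
by rewrite exchange_big; apply: leq_sum => k _; apply: count_reach_in.
Qed.

Lemma count_explored f u :
  (\sum_a \sum_b explored f u a b <= q * \sum_(k < q) q ^ k)%N.
Proof.
apply: (@leq_trans (\sum_a reach f u a * q)).
  apply: leq_sum => a _; under eq_bigr do rewrite /explored -mulnb.
  by rewrite -big_distrr /= leq_mul2l count_sampled orbT.
by rewrite -big_distrl /= mulnC leq_mul2l count_reach orbT.
Qed.
End Reach.

Section Walks.
Variables (T : finType) (q : nat) (f : source T q).

Lemma reach_in_path k u a :
  reach_in f k u a -> exists2 s, size s = k & path (sampled f) u s && (last u s == a).
Proof.
elim: k u => [|k IHk] u /=; first by move=> /eqP ->; exists [::]; rewrite /= ?eqxx.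
case/existsP => y /andP [fuy /IHk [s <- /andP [ys sa]]].
by exists (y :: s); rewrite //= fuy ys sa.
Qed.

Lemma reach_in_rcons k u a b : reach_in f k u a -> sampled f a b -> reach_in f k.+1 u b.
Proof.
elim: k u => [|k IHk] u /=.
  by move=> /eqP -> fab; apply/existsP; exists b; rewrite fab /=.
case/existsP => y /andP [fuy ya] fab; apply/existsP; exists y.
by rewrite fuy; apply: IHk ya fab.
Qed.

Lemma reach_uniq_path u a : reach f u a ->
  exists2 s, (size s < q)%N & [&& uniq (u :: s), path (sampled f) u s & last u s == a].
Proof.
case/existsP => k /reach_in_path [s sk /andP [us /eqP <-]].
case: (shortenP us) => s' us' uniq_s' sub_s'.
exists s'; last by rewrite uniq_s' us' eqxx.
apply: leq_ltn_trans (ltn_ord k); rewrite -sk.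
by apply: uniq_leq_size sub_s'; case/andP: uniq_s'.
Qed.

Lemma explored_le_walks u a b : (explored f u a b <= \sum_(d < q) \sum_(s : d.-tuple T)
    [&& last u s == a, uniq (u :: s) & path (sampled f) u (rcons s b)])%N.
Proof.
have [|//] := boolP (explored f u a b).
case/andP => /reach_uniq_path [s s_lt /and3P [us ps /eqP sa]] fab.
have walk_s : [&& last u s == a, uniq (u :: s) & path (sampled f) u (rcons s b)].
  by rewrite rcons_path sa eqxx us ps fab.
rewrite (bigD1 (Ordinal s_lt)) //= (bigD1 (in_tuple s)) //= -addnA.
by apply: leq_trans (leq_addr _ _); rewrite lt0b; apply: walk_s.
Qed.
End Walks.

Section BFSInvariant.
Variables (T : finType) (q : nat) (f : source T q) (v : T).

Definition explored_edge (eps : {set T}) : Prop :=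
  exists a b, eps = [set a; b] /\ explored f v a b.

Definition bfs_inv (st : state T) : Prop :=
  let: (Q, lvl, E) := st in
  [/\ forall x l, lvl x = Some l -> (l < q)%N /\ reach_in f l v x,
      forall x, x \in Q -> lvl x != None &
      forall eps, eps \in E -> explored_edge eps].

Lemma step_sample_inv u st o : o \in tval (f u) -> bfs_inv st -> st.1.2 u != None ->
  bfs_inv (step_sample q u st o) /\ (step_sample q u st o).1.2 u != None.
Proof.
case: st => [[Q lvl] E] + [lvl_reach Q_lvl E_explored] /=.
case: o => [s fus|//]; case lvl_u: (lvl u) => [l|//] _.
have [l_lt reach_u] := lvl_reach u l lvl_u.
have E'_explored : forall eps, eps \in [set u; s] |: E -> explored_edge eps.
  move=> eps /setU1P [->|]; last exact: E_explored.
  exists u, s; split=> //; rewrite /explored /sampled fus andbT.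
  by apply/existsP; exists (Ordinal l_lt).
have no_enqueue : bfs_inv (Q, lvl, [set u; s] |: E) /\ lvl u != None.
  by split; [split | rewrite lvl_u].
case: (lvl s) => [ls|]; first exact: no_enqueue.
case: ifP => [l_lt'|_]; last exact: no_enqueue.
split; last by rewrite /= ffunE; case: (u =P s); rewrite ?lvl_u.
split=> // [x k|x].
  rewrite ffunE; case: eqP => [-> [<-]|_]; last exact: lvl_reach.
  by split; [rewrite -ltn_predRL | apply: reach_in_rcons reach_u fus].
by rewrite mem_rcons in_cons ffunE; case: eqP => // _; apply: Q_lvl.
Qed.

Lemma foldl_step_sample_inv u (os : seq (option T)) st :
  {subset os <= tval (f u)} -> bfs_inv st -> st.1.2 u != None ->
  bfs_inv (foldl (step_sample q u) st os).
Proof.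
elim: os st => [|o os IHos] st //= os_fu st_inv u_lvl.
have [st'_inv u_lvl'] := step_sample_inv (os_fu o (mem_head _ _)) st_inv u_lvl.
by apply: IHos => // o' o'_os; apply: os_fu; rewrite in_cons o'_os orbT.
Qed.

Lemma bfs_loop_explored fuel st : bfs_inv st ->
  forall eps, eps \in bfs_loop f fuel st -> explored_edge eps.
Proof.
elim: fuel st => [|k IHk] [[[|u Q] lvl] E] [lvl_reach Q_lvl E_explored] //=.
apply: IHk; apply: foldl_step_sample_inv => //; last by apply: Q_lvl; rewrite mem_head.
by split=> // x x_Q; apply: Q_lvl; rewrite in_cons x_Q orbT.
Qed.

Lemma rbfs_edges_explored eps : (0 < q)%N -> eps \in rbfs_edges f v -> explored_edge eps.
Proof.
move=> q_gt0; apply: bfs_loop_explored; split=> [x l|x|eps'].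
- by rewrite ffunE; case: eqP => [-> [<-]|//]; rewrite /= eqxx.
- by rewrite inE => /eqP ->; rewrite ffunE eqxx.
- by rewrite inE.
Qed.
End BFSInvariant.

Lemma set2_eq (X : finType) (a b c d : X) :
  [set a; b] = [set c; d] -> (c = a /\ d = b) \/ (c = b /\ d = a).
Proof.
move=> E.
have /set2P c_ab : c \in [set a; b] by rewrite E set21.
have /set2P d_ab : d \in [set a; b] by rewrite E set22.
have /set2P a_cd : a \in [set c; d] by rewrite -E set21.
have /set2P b_cd : b \in [set c; d] by rewrite -E set22.
by case: c_ab d_ab a_cd b_cd => -> [] -> [] ? [] ?; subst; auto.
Qed.

Lemma rbfs_common_edge (T : finType) (q : nat) (f1 f2 : source T q) (u v : T) :
  (0 < q)%N -> rbfs_edges f1 u :&: rbfs_edges f2 v != set0 ->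
  exists a b, explored f1 u a b && (explored f2 v a b || explored f2 v b a).
Proof.
move=> q_gt0 /set0Pn [eps]; rewrite inE => /andP [eps1 eps2].
have [a [b [eps_ab ab1]]] := rbfs_edges_explored q_gt0 eps1.
have [c [d [eps_cd cd2]]] := rbfs_edges_explored q_gt0 eps2.
exists a, b; rewrite ab1.
by case: (set2_eq (etrans (esym eps_ab) eps_cd)) => -[<- <-]; rewrite cd2 ?orbT.
Qed.

Lemma natr_path (R : pzSemiRingType) (X : Type) (r : rel X) x s :
  (path r x s)%:R = \prod_(p <- zip (x :: s) s) (r p.1 p.2)%:R :> R.
Proof.
elim: s x => [|y s IHs] x; first by rewrite big_nil.
by rewrite big_cons /= -IHs -natrM mulnb.
Qed.

Lemma unzip1_zip_belast (X : Type) (x : X) s : unzip1 (zip (x :: s) s) = belast x s.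
Proof. by elim: s x => [|y s IHs] x //=; rewrite IHs. Qed.

Lemma sum_mul_exchange (R : comPzSemiRingType) (I C : finType) (w : I -> R)
    (x y : I -> C -> R) :
  \sum_i \sum_j w i * w j * \sum_c x i c * y j c
  = \sum_c (\sum_i w i * x i c) * (\sum_j w j * y j c).
Proof.
under [RHS]eq_bigr do rewrite big_distrlr.
rewrite [RHS]exchange_big; apply: eq_bigr => i _; rewrite [RHS]exchange_big.
apply: eq_bigr => j _; rewrite mulr_sumr.
by apply: eq_bigr => c _; rewrite mulrACA.
Qed.

Lemma c_q_gt0 q : (0 < c_q q)%N.
Proof. by rewrite /c_q big_ord_recl expn0. Qed.

Lemma sum_pow_le_c_q q : (\sum_(k < q) q ^ k <= c_q q)%N.
Proof. by rewrite /c_q big_ord_recr leq_addr. Qed.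

Lemma sum_powS_le_c_q q : (\sum_(k < q) q ^ k.+1 <= c_q q)%N.
Proof. by rewrite /c_q big_ord_recl leq_addl. Qed.

Section Overlap.
Variables (R : realFieldType) (T : finType) (e : rel T) (q : nat).
Hypothesis e_sym : symmetric e.

Local Notation P x y := (answer_weight e R x (Some y)).
Local Notation source_weight := (@source_weight T e q R).

Definition walk_weight (x : T) (s : seq T) : R := \prod_(p <- zip (x :: s) s) P p.1 p.2.

Lemma walk_weight_cons x y s : walk_weight x (y :: s) = P x y * walk_weight y s.
Proof. exact: big_cons. Qed.

Lemma walk_weight_ge0 x s : 0 <= walk_weight x s.
Proof. by apply: prodr_ge0 => p _; apply: answer_weight_ge0. Qed.

Lemma answer_weight_le_adj x y : P x y <= (e x y)%:R.
Proof.
rewrite /=; case: ifP => // /deg_gt0 d_gt0.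
by rewrite invf_le1 ?ler1n ?ltr0n.
Qed.

Lemma sum_adj y : \sum_x (e x y)%:R = (deg e y)%:R :> R.
Proof.
rewrite /deg /nbrs -sum1_card natr_sum [RHS]big_mkcond /=.
by apply: eq_bigr => x _; rewrite inE e_sym; case: (e y x).
Qed.

Definition walk_mass d u a b : R :=
  \sum_(s : d.-tuple T) (last u s == a)%:R * walk_weight u (rcons s b).

Lemma walk_massS d u a b : walk_mass d.+1 u a b = \sum_y P u y * walk_mass d y a b.
Proof.
rewrite /walk_mass big_tuple_cons /=; apply: eq_bigr => y _; rewrite mulr_sumr.
by apply: eq_bigr => s _; rewrite walk_weight_cons mulrCA.
Qed.

(* The hypothesis on [psi] is [psi <= deg]; one step of the walk preserves it
   because [deg] is stationary for the random walk on a symmetric graph. *)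
Lemma sum_walk_mass_le d a b (psi : T -> R) :
  (forall x, 0 <= psi x) -> (forall x y, psi x * P x y <= (e x y)%:R) ->
  \sum_u psi u * walk_mass d u a b <= 1.
Proof.
elim: d psi => [|d IHd] psi psi_ge0 psi_le.
  under eq_bigr do
    rewrite /walk_mass big_tuple0 /= walk_weight_cons [walk_weight _ _]big_nil mulr1.
  rewrite (bigD1 a) //= eqxx mul1r big1 ?addr0 => [|u /negbTE ->]; last first.
    by rewrite mul0r mulr0.
  by apply: le_trans (psi_le a b) _; rewrite lern1 leq_b1.
pose psi' y := \sum_u psi u * P u y.
have -> : \sum_u psi u * walk_mass d.+1 u a b = \sum_y psi' y * walk_mass d y a b.
  under eq_bigr do rewrite walk_massS mulr_sumr.
  rewrite exchange_big; apply: eq_bigr => y _; rewrite mulr_suml.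
  by apply: eq_bigr => u _; rewrite mulrA.
apply: IHd => [y|y z].
  by apply: sumr_ge0 => u _; apply: mulr_ge0 (psi_ge0 u) _; apply: answer_weight_ge0.
rewrite -(deg_answer_weight R) -sum_adj !mulr_suml; apply: ler_sum => u _.
by apply: ler_wpM2r; [apply: answer_weight_ge0 | apply: psi_le].
Qed.

(* [belast u s] lists the vertices whose answers the walk reads; their
   distinctness makes the steps independent. *)
Lemma expect_walk u s : uniq (belast u s) ->
  \sum_f source_weight f * (path (sampled f) u s)%:R
  <= q%:R ^+ size s * walk_weight u s.
Proof.
move=> walk_uniq; under eq_bigr do rewrite natr_path.
rewrite (expect_prod_seq e (fun p (t : q.-tuple _) => (Some p.2 \in tval t)%:R));
  last by rewrite unzip1_zip_belast.
apply: (@le_trans _ _ (\prod_(p <- zip (u :: s) s) (q%:R * P p.1 p.2))).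
  apply: ler_prod => p _; apply/andP; split; last exact: expect_mem.
  by apply: sumr_ge0 => t _; rewrite mulr_ge0 ?ler0n ?tuple_weight_ge0.
rewrite big_split /= big_const_seq count_predT iter_mulr_1 size_zip /=.
by rewrite (minn_idPr (leqnSn _)).
Qed.

Lemma expect_explored_le u a b :
  \sum_f source_weight f * (explored f u a b)%:R
  <= \sum_(d < q) q%:R ^+ d.+1 * walk_mass d u a b.
Proof.
apply: (@le_trans _ _ (\sum_f source_weight f * \sum_(d < q) \sum_(s : d.-tuple T)
    ([&& last u s == a, uniq (u :: s) & path (sampled f) u (rcons s b)])%:R)).
  apply: ler_sum => f _; apply: ler_wpM2l; first exact: source_weight_ge0.
  apply: le_trans (_ : _ <= (\sum_(d < q) \sum_(s : d.-tuple T)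
      [&& last u s == a, uniq (u :: s) & path (sampled f) u (rcons s b)])%:R) _.
    by rewrite ler_nat explored_le_walks.
  by rewrite natr_sum; under eq_bigr do rewrite natr_sum.
under eq_bigr do rewrite mulr_sumr; rewrite exchange_big /=; apply: ler_sum => d _.
under eq_bigr do rewrite mulr_sumr; rewrite exchange_big /= /walk_mass mulr_sumr.
apply: ler_sum => s _; case: (last u s == a); rewrite ?mul0r ?mulr0 ?mul1r; last first.
  by rewrite big1 // => f _; rewrite mulr0.
have [us|] := boolP (uniq (u :: s)); last first.
  move=> /= /negbTE ->.
  by rewrite big1 ?mulr_ge0 ?exprn_ge0 ?ler0n ?walk_weight_ge0 // => f _; rewrite mulr0.
move: (us) => /= ->; rewrite -(belast_rcons u s b) in us.
by have := expect_walk us; rewrite size_rcons size_tuple.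
Qed.

Definition expected_explored (a b : T) : R :=
  \sum_(p : T * source T q) source_weight p.2 * (explored p.2 p.1 a b)%:R.

Lemma sum_start_weight : \sum_(p : T * source T q) source_weight p.2 = #|T|%:R.
Proof.
rewrite -(pair_bigA _ (fun _ f => source_weight f)) /=.
by under eq_bigr do rewrite sum_source_weight; rewrite sumr_const.
Qed.

Lemma expected_explored_le_c_q a b : expected_explored a b <= (c_q q)%:R.
Proof.
rewrite /expected_explored.
rewrite -(pair_bigA _ (fun u f => source_weight f * (explored f u a b)%:R)) /=.
apply: le_trans (ler_sum _ (fun u _ => expect_explored_le u a b)) _.
rewrite exchange_big /=.
apply: (@le_trans _ _ (\sum_(d < q) q%:R ^+ d.+1)).
  apply: ler_sum => d _; rewrite -mulr_sumr -[leRHS]mulr1 ler_wpM2l ?exprn_ge0 ?ler0n //.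
  have := sum_walk_mass_le d a b (psi := fun _ => 1) (fun _ => ler01).
  under eq_bigr do rewrite mul1r; apply=> x y; rewrite mul1r; exact: answer_weight_le_adj.
have := sum_powS_le_c_q q; rewrite -(ler_nat R) natr_sum.
by under eq_bigr do rewrite natrX.
Qed.

Lemma sum_expected_explored :
  \sum_(c : T * T) expected_explored c.1 c.2 <= #|T|%:R * (q * c_q q)%:R.
Proof.
rewrite /expected_explored exchange_big /= -sum_start_weight mulr_suml.
apply: ler_sum => p _; rewrite -mulr_sumr ler_wpM2l ?source_weight_ge0 //.
rewrite -(pair_bigA _ (fun a b => (explored p.2 p.1 a b)%:R)) /=.
under eq_bigr do rewrite -natr_sum; rewrite -natr_sum ler_nat.
by rewrite (leq_trans (count_explored _ _)) // leq_mul2l sum_pow_le_c_q orbT.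
Qed.

Lemma not_disjoint_le_explored (f1 f2 : source T q) u v : (0 < q)%N ->
  1 - (if rbfs_edges f1 u :&: rbfs_edges f2 v == set0 then 1 else 0 : R)
  <= \sum_(c : T * T) (explored f1 u c.1 c.2)%:R
       * ((explored f2 v c.1 c.2)%:R + (explored f2 v c.2 c.1)%:R).
Proof.
move=> q_gt0; case: ifP => [_|/negbT].
  by rewrite subrr sumr_ge0 // => c _; rewrite mulr_ge0 ?addr_ge0.
case/(rbfs_common_edge q_gt0) => a [b /andP [ab1 ab2]].
rewrite subr0 (bigD1 (a, b)) //= ab1 mul1r.
apply: (@le_trans _ _ ((explored f2 v a b)%:R + (explored f2 v b a)%:R)).
  by case/orP: ab2 => ->; rewrite ?lerDl ?lerDr.
by rewrite lerDl sumr_ge0 // => c _; rewrite mulr_ge0 ?addr_ge0.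
Qed.

Lemma overlap_le_expected : (0 < q)%N -> (0 < #|T|)%N ->
  1 - prob_disjoint e q R <= (#|T| ^ 2)%:R^-1 * \sum_(c : T * T)
    expected_explored c.1 c.2 * (expected_explored c.1 c.2 + expected_explored c.2 c.1).
Proof.
move=> q_gt0 T_gt0; set K : R := (#|T| ^ 2)%:R^-1.
pose w (p : T * source T q) := source_weight p.2.
pose disjoint (p1 p2 : T * source T q) : R :=
  if rbfs_edges p1.2 p1.1 :&: rbfs_edges p2.2 p2.1 == set0 then 1 else 0.
have mass : \sum_p1 \sum_p2 K * w p1 * w p2 = 1.
  under eq_bigr do rewrite -mulr_sumr sum_start_weight.
  rewrite -mulr_suml -mulr_sumr sum_start_weight -mulrA -natrM mulnn mulVf //.
  by rewrite pnatr_eq0 expn_eq0 gtn_eqF.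
have prob_pairs : prob_disjoint e q R = \sum_p1 \sum_p2 K * w p1 * w p2 * disjoint p1 p2.
  rewrite /prob_disjoint -/K -(pair_bigA _ (fun u f1 =>
    \sum_p2 K * source_weight f1 * w p2 * disjoint (u, f1) p2)) /=.
  apply: eq_bigr => u _; rewrite exchange_big /=; apply: eq_bigr => f1 _.
  by rewrite (pair_bigA _ (fun v f2 =>
    K * source_weight f1 * source_weight f2 * disjoint (u, f1) (v, f2))).
pose x (p : T * source T q) (c : T * T) : R := (explored p.2 p.1 c.1 c.2)%:R.
have -> : 1 - prob_disjoint e q R
    = \sum_p1 \sum_p2 K * w p1 * w p2 * (1 - disjoint p1 p2).
  rewrite prob_pairs -{1}mass -sumrB; apply: eq_bigr => p1 _; rewrite -sumrB.
  by apply: eq_bigr => p2 _; rewrite mulrBr mulr1.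
apply: (@le_trans _ _ (K * \sum_p1 \sum_p2 w p1 * w p2 *
    \sum_c x p1 c * (x p2 c + x p2 (c.2, c.1)))).
  rewrite mulr_sumr; apply: ler_sum => p1 _; rewrite mulr_sumr; apply: ler_sum => p2 _.
  rewrite -!mulrA; apply: ler_wpM2l; first by rewrite invr_ge0 ler0n.
  apply: ler_wpM2l; first exact: source_weight_ge0.
  apply: ler_wpM2l; first exact: source_weight_ge0.
  exact: not_disjoint_le_explored.
rewrite sum_mul_exchange ler_wpM2l ?invr_ge0 ?ler0n //.
apply: ler_sum => c _; rewrite -big_split /=.
by under [in leRHS]eq_bigr do rewrite -mulrDr.
Qed.

Lemma overlap_le : (0 < q)%N -> (0 < #|T|)%N ->
  1 - prob_disjoint e q R <= 2 * (q * c_q q)%:R * ((c_q q)%:R / #|T|%:R).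
Proof.
move=> q_gt0 T_gt0; apply: le_trans (overlap_le_expected q_gt0 T_gt0) _.
have Y_ge0 a b : 0 <= expected_explored a b.
  by apply: sumr_ge0 => p _; rewrite mulr_ge0 ?source_weight_ge0.
apply: (@le_trans _ _ ((#|T| ^ 2)%:R^-1 *
    \sum_(c : T * T) expected_explored c.1 c.2 * (2 * (c_q q)%:R))).
  rewrite ler_wpM2l ?invr_ge0 ?ler0n //; apply: ler_sum => c _.
  by rewrite ler_wpM2l // mulr_natl mulr2n lerD ?expected_explored_le_c_q.
apply: (@le_trans _ _ ((#|T| ^ 2)%:R^-1 * (#|T|%:R * (q * c_q q)%:R * (2 * (c_q q)%:R)))).
  rewrite -mulr_suml ler_wpM2l ?invr_ge0 ?ler0n // ler_wpM2r ?mulr_ge0 ?ler0n //.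
  exact: sum_expected_explored.
have T_neq0 : #|T|%:R != 0 :> R by rewrite pnatr_eq0 -lt0n.
by rewrite le_eqVlt; apply/orP; left; apply/eqP; rewrite natrX; field.
Qed.

End Overlap.

Theorem lemma3p8 (R : realFieldType) (T : finType) (e : rel T)
  (e_sym : symmetric e) (e_irr : irreflexive e)
  (q : nat) (alpha : R) :
  (0 < q)%N -> 0 < alpha -> alpha <= 1 ->
  (q * c_q q)%:R / alpha ^+ 2 <= #|T|%:R ->
  1 - 2 * alpha * (q * c_q q)%:R <= prob_disjoint e q R.
Proof.
move=> q_gt0 alpha_gt0 alpha_le1 T_large.
have qc_gt0 : 0 < (q * c_q q)%:R :> R by rewrite ltr0n muln_gt0 q_gt0 c_q_gt0.
have T_gt0 : (0 < #|T|)%N.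
  by rewrite -(ltr0n R); apply: lt_le_trans T_large; rewrite divr_gt0 ?exprn_gt0.
have c_q_small : (c_q q)%:R / #|T|%:R <= alpha.
  rewrite ler_pdivrMr ?ltr0n //; apply: (@le_trans _ _ (#|T|%:R * alpha ^+ 2)).
    apply: le_trans (_ : (q * c_q q)%:R <= _); first by rewrite ler_nat leq_pmull.
    by rewrite -ler_pdivrMr ?exprn_gt0.
  rewrite [leRHS]mulrC ler_pM2l ?ltr0n // expr2.
  exact: ler_piMl (ltW alpha_gt0) alpha_le1.
have := overlap_le R e_sym q_gt0 T_gt0.
have : 2 * (q * c_q q)%:R * ((c_q q)%:R / #|T|%:R) <= 2 * alpha * (q * c_q q)%:R.
  by rewrite [leRHS]mulrAC ler_pM2l // mulr_gt0.
lra.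
Qed.
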